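(* Let $\mathcal{R}$ be a finite valuation ring with residue field of cardinality $q$ and with uniformizer of nilpotency degree $r$ (so $|\mathcal{R}|=q^r$), and let $\mathcal{R}^*$ denote its group of units. Let $G$ be a subgroup of $\mathcal{R}^*$, let $g,h\colon G\to\mathcal{R}^*$ be arbitrary functions, and define $f\colon G\times\mathcal{R}^*\to\mathcal{R}$ by $f(x,y)=g(x)(h(x)+y)$. Put $m=\mu(g)$. Then there is a constant $c>0$ depending only on $r$ such that for all sets $A\subset G$ and $B,C\subset\mathcal{R}^*$, \[|f(A,B)|\,|B+C|\ \ge\ c\min\left\{\frac{q^r|B|}{m},\ \frac{|A||B|^2|C|}{m^2q^{2r-1}}\right\}.\]
   Context: A finite valuation ring is a finite commutative ring with identity that is local (has a unique maximal ideal) and principal (every ideal is principal); its maximal ideal is generated by a non-unit $z$ (a uniformizer), the residue field $\mathcal{R}/(z)$ has $q$ elements, and $r$ is the least integer with $z^r=0$. For a function $\varphi\colon G\to\mathcal{R}$, $\mu(\varphi)=\max_{t\in\mathcal{R}}|\{x\in G:\varphi(x)=t\}|$. Notation: $f(A,B)=\{f(x,y):x\in A,y\in B\}$ and $B+C=\{b+c:b\in B,c\in C\}$. *)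

From mathcomp Require Import all_boot all_order all_algebra all_fingroup.
Set Implicit Arguments. Unset Strict Implicit. Unset Printing Implicit Defensive.
Import Order.TTheory GRing.Theory Num.Theory.
Local Open Scope ring_scope.

Section ValRing.
Variable R : finComUnitRingType.

Definition is_ideal (I : {set R}) : Prop :=
  [/\ 0 \in I,
      (forall x y, x \in I -> y \in I -> x + y \in I) &
      (forall a x, x \in I -> a * x \in I)].

Definition pideal (x : R) : {set R} := [set a * x | a : R].

Definition is_principal (I : {set R}) : Prop := exists x : R, I = pideal x.

Definition is_maximal_ideal (I : {set R}) : Prop :=
  [/\ is_ideal I, I != [set: R] &
      (forall J, is_ideal J -> I \subset J -> J = I \/ J = [set: R])].

Definition is_local : Prop :=
  exists M, is_maximal_ideal M /\ forall J, is_maximal_ideal J -> J = M.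

Definition is_principal_ring : Prop :=
  forall I, is_ideal I -> is_principal I.

Definition finite_valuation_ring : Prop := is_local /\ is_principal_ring.

Definition uniformizer (z : R) : Prop :=
  z \isn't a GRing.unit /\ is_maximal_ideal (pideal z).

Definition nilp_degree (z : R) (r : nat) : Prop :=
  z ^+ r = 0 /\ forall k, (k < r)%N -> z ^+ k != 0.

(* cardinality of the residue ring R/(z): the number of cosets of (z) *)
Definition residue_card (z : R) : nat :=
  #|[set [set x + y | y in pideal z] | x : R]|.

Definition mu (G : {set {unit R}}) (phi : {unit R} -> R) : nat :=
  \max_(t : R) #|[set x in G | phi x == t]|.

Definition fimage (g h : {unit R} -> {unit R}) (A B : {set {unit R}}) : {set R} :=
  [set (val (g x)) * (val (h x) + val y) | x in A, y in B].

Definition sumset (B C : {set {unit R}}) : {set R} :=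
  [set val b + val c | b in B, c in C].

End ValRing.

(* Each pair (x, c) in A x C defines the line s = g(x) (h(x) + t - c) in R x R, which passes
   through the |B| points (b + c, f(x, b)) of P = (B + C) x f(A, B). Two such lines meet in at
   most one point when the difference of their slopes g(x) - g(x') is a unit; otherwise g(x')
   lies in the coset g(x) + (z) of the maximal ideal, of size q^(r-1), which by the definition
   of m happens for at most m q^(r-1) elements x' of A. So the number of lines through a point
   has mean |A||C| / q^r and small variance, and Cauchy-Schwarz shows that P, receiving
   |A||B||C| incidences, has at least min(q^r |B| / 2, |A||B|^2|C| / (4 m q^(2r-1))) elements. *)

From mathcomp Require Import all_boot all_order all_algebra all_fingroup.
From mathcomp Require Import ring lra zify.
Set Implicit Arguments. Unset Strict Implicit. Unset Printing Implicit Defensive.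
Import Order.TTheory GRing.Theory Num.Theory.
Local Open Scope ring_scope.

Lemma card_sum_fibers (T U : finType) (f : T -> U) (D : {set T}) :
  #|D| = (\sum_(v in f @: D) #|[set x in D | f x == v]|)%N.
Proof.
rewrite -sum1_card (partition_big_imset f) /=.
by apply: eq_bigr => v _; rewrite sum1dep_card.
Qed.

Lemma card_uniform_fibers (T U : finType) (f : T -> U) (D : {set T}) k :
  {in D, forall x, #|[set y in D | f y == f x]| = k} -> #|D| = (#|f @: D| * k)%N.
Proof.
move=> fibk; rewrite (card_sum_fibers f) -sum_nat_const.
by apply: eq_bigr => _ /imsetP[x Dx ->]; rewrite fibk.
Qed.

Lemma card_le_fibers (T U : finType) (f : T -> U) (D : {set T}) k :
  {in D, forall x, #|[set y in D | f y == f x]| <= k}%N -> (#|D| <= #|f @: D| * k)%N.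
Proof.
move=> fibk; rewrite (card_sum_fibers f) -sum_nat_const.
by apply: leq_sum => _ /imsetP[x Dx ->]; rewrite fibk.
Qed.

Lemma card_additive_fibers (V W : finZmodType) (f : V -> W) (S : {set V}) :
  {morph f : u v / u - v} -> {in S &, forall u v, u - v \in S} ->
  #|S| = (#|f @: S| * #|[set k in S | f k == 0%R]|)%N.
Proof.
move=> fB subS; apply: card_uniform_fibers => x Sx.
have S0 : 0 \in S by rewrite -(subrr x) subS.
have f0 : f 0 = 0 by rewrite -(subrr 0) fB subrr.
have fN v : f (- v) = - f v by rewrite -sub0r fB f0 sub0r.
have fD u v : f (u + v) = f u + f v by rewrite -{1}[v]opprK fB fN opprK.
rewrite -[RHS](card_imset _ (addrI x)); apply: eq_card => y; rewrite !inE.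
apply/andP/imsetP => [[Sy /eqP fyx]|[k]].
  exists (y - x); last by rewrite addrC subrK.
  by rewrite inE subS //= fB fyx subrr.
rewrite inE => /andP[Sk /eqP fk0] ->.
split; last by rewrite fD fk0 addr0.
by rewrite -[k]opprK subS // -sub0r subS.
Qed.

Section PrincipalIdeals.
Variable R : finComUnitRingType.
Implicit Types (a x y z u : R).

Lemma pidealP x y : reflect (exists a, y = a * x) (y \in pideal x).
Proof. by apply: (iffP imsetP) => [[a _ ->]|[a ->]]; exists a. Qed.

Lemma pidealM a x : a * x \in pideal x.
Proof. exact: imset_f. Qed.

Lemma pideal0 x : 0 \in pideal x.
Proof. by rewrite -(mul0r x) pidealM. Qed.

Lemma pidealB x : {in pideal x &, forall u v, u - v \in pideal x}.
Proof. by move=> _ _ /pidealP[a ->] /pidealP[b ->]; rewrite -mulrBl pidealM. Qed.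

Lemma pideal1 : pideal 1 = [set: R].
Proof. by apply/setP => y; rewrite inE -[y]mulr1 pidealM. Qed.

Lemma unitr1B_nilpotent a n : a ^+ n = 0 -> 1 - a \is a GRing.unit.
Proof.
move=> an0; apply/unitrPr; exists (\sum_(i < n) a ^+ i).
by rewrite -opprB mulNr -subrX1 an0 sub0r opprK.
Qed.

Lemma nonunit_mem_pideal z u n :
  is_maximal_ideal (pideal z) -> z ^+ n = 0 -> u \isn't a GRing.unit ->
  u \in pideal z.
Proof.
move=> [_ _ zmax] zn0 u_nonunit.
pose J := [set a * z + b * u | a in [set: R], b in [set: R]].
have J_ideal : is_ideal J.
  split.
  - by apply/imset2P; exists 0 0; rewrite ?inE ?mul0r ?addr0.
  - move=> _ _ /imset2P[a b _ _ ->] /imset2P[a' b' _ _ ->].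
    by apply/imset2P; exists (a + a') (b + b'); rewrite ?inE // !mulrDl addrACA.
  - move=> c _ /imset2P[a b _ _ ->].
    by apply/imset2P; exists (c * a) (c * b); rewrite ?inE // mulrDr !mulrA.
have zJ : pideal z \subset J.
  by apply/subsetP => _ /pidealP[a ->]; apply/imset2P; exists a 0; rewrite ?inE ?mul0r ?addr0.
have uJ : u \in J by apply/imset2P; exists 0 1; rewrite ?inE ?mul0r ?mul1r ?add0r.
case: (zmax J J_ideal zJ) => [<- //|JT].
have /imset2P[a b _ _ one_eq] : 1 \in J by rewrite JT inE.
have : b * u \is a GRing.unit.
  rewrite (_ : b * u = 1 - a * z); last by rewrite one_eq addrAC subrr add0r.
  by apply: (@unitr1B_nilpotent _ n); rewrite exprMn zn0 mulr0.
by rewrite unitrM (negPf u_nonunit) andbF.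
Qed.

Definition add_coset (S : {set R}) x : {set R} := [set x + y | y in S].

Lemma mem_add_coset x y w : (w \in add_coset (pideal x) y) = (w - y \in pideal x).
Proof.
apply/imsetP/idP => [[s xs ->]|xwy]; last by exists (w - y); rewrite // addrC subrK.
by rewrite addrC addKr.
Qed.

Lemma eq_add_coset x y y' :
  (add_coset (pideal x) y == add_coset (pideal x) y') = (y - y' \in pideal x).
Proof.
apply/eqP/idP => [eqyy'|xyy'].
  by rewrite -mem_add_coset -eqyy' mem_add_coset subrr pideal0.
have xy'y : y' - y \in pideal x by rewrite -opprB -sub0r pidealB ?pideal0.
apply/setP => w; rewrite !mem_add_coset; apply/idP/idP => xw.
  by rewrite -(subrKA y) -[y - y']opprB pidealB.
by rewrite -(subrKA y') -[y' - y]opprB pidealB.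
Qed.

Lemma card_residue x : #|R| = (residue_card x * #|pideal x|)%N.
Proof.
rewrite -cardsT.
rewrite (card_uniform_fibers (f := add_coset (pideal x)) (k := #|pideal x|)) => [|y _].
  by congr (_ * _)%N; apply: eq_card => S; apply/imsetP/imsetP => -[w _ ->]; exists w.
rewrite -[RHS](card_imset _ (addrI y)); apply: eq_card => w.
by rewrite !inE eq_add_coset -mem_add_coset.
Qed.

End PrincipalIdeals.

Section UniformizerPowers.
Variables (R : finComUnitRingType) (z : R) (r : nat).
Hypotheses (zmax : is_maximal_ideal (pideal z)) (zr : nilp_degree z r).

Let q := residue_card z.

Lemma nilp_degree_gt0 : (0 < r)%N.
Proof. by case: zr; case: r => // /eqP; rewrite expr0 oner_eq0. Qed.

Lemma card_pideal_expS j : (j < r)%N -> #|pideal (z ^+ j)| = (q * #|pideal (z ^+ j.+1)|)%N.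
Proof.
move=> ltjr; pose f a := a * z ^+ j.
have fB : {morph f : u v / u - v} by move=> u v; rewrite /f mulrBl.
have kerf : [set a in pideal z | f a == 0] = [set a in [set: R] | f a == 0].
  apply/setP => a; rewrite !inE andb_idl // => /eqP faz.
  apply: (nonunit_mem_pideal zmax zr.1); apply: contraNN (zr.2 j ltjr) => a_unit.
  by rewrite -(mulKr a_unit (z ^+ j)) [a * _]faz mulr0.
have fR : f @: [set: R] = pideal (z ^+ j).
  by apply/setP => w; apply/imsetP/pidealP => -[a]; exists a.
have fz : f @: pideal z = pideal (z ^+ j.+1).
  apply/setP => w; apply/imsetP/pidealP => [[_ /pidealP[a ->] ->]|[a ->]].
    by exists a; rewrite /f -mulrA -exprS.
  by exists (a * z); rewrite ?pidealM // /f -mulrA -exprS.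
have := card_additive_fibers fB (pidealB (x := z)).
have := card_additive_fibers (S := [set: R]) fB (fun u v _ _ => in_setT (u - v)).
rewrite kerf fz fR cardsT (card_residue z) -/q => eqR eqz.
have kerf_gt0 : (0 < #|[set a in [set: R] | f a == 0%R]|)%N.
  by apply/card_gt0P; exists 0%R; rewrite !inE /= /f mul0r.
by apply/eqP; rewrite -(eqn_pmul2r kerf_gt0) -eqR eqz mulnA.
Qed.

Lemma card_pideal_exp j : (j <= r)%N -> #|pideal (z ^+ j)| = (q ^ (r - j))%N.
Proof.
move=> lejr; rewrite -{1}(subKn lejr); elim: (r - j)%N (leq_subr j r) => [_|k IHk ltkr].
  rewrite subn0 zr.1 (_ : pideal 0 = [set 0]) ?cards1 //.
  by apply/setP => w; rewrite inE; apply/pidealP/eqP => [[a ->]|->]; [|exists 0]; rewrite mulr0.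
rewrite card_pideal_expS; last by lia.
by rewrite subnSK // IHk 1?ltnW // expnS.
Qed.

Lemma card_ring : #|R| = (q ^ r)%N.
Proof. by rewrite -cardsT -pideal1 -(expr0 z) card_pideal_exp ?subn0. Qed.

Lemma card_maximal_ideal : #|pideal z| = (q ^ r.-1)%N.
Proof. by rewrite -(expr1 z) card_pideal_exp ?subn1 // nilp_degree_gt0. Qed.

End UniformizerPowers.

Lemma sum_setX (T1 T2 : finType) (A1 : {set T1}) (A2 : {set T2}) (F : T1 * T2 -> nat) :
  (\sum_(u in setX A1 A2) F u = \sum_(a in A1) \sum_(b in A2) F (a, b))%N.
Proof. by rewrite pair_big; apply: eq_big => [[a b]|[a b] _]; rewrite ?inE. Qed.

Lemma sum_pred_card (T : finType) (D : {set T}) (Q : pred T) :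
  (\sum_(x in D) Q x)%N = #|[set x in D | Q x]|.
Proof. by rewrite -sum1dep_card big_mkcondr; apply: eq_bigr => x _; case: (Q x). Qed.

Lemma sum_card_incidence (X Y : finType) (P : {set X}) (L : {set Y}) (E : Y -> X -> bool) :
  (\sum_(p in P) #|[set l in L | E l p]| = \sum_(l in L) #|[set p in P | E l p]|)%N.
Proof.
under eq_bigr do rewrite -sum_pred_card; rewrite exchange_big /=.
by under [RHS]eq_bigr do rewrite -sum_pred_card.
Qed.

Section FunctionGraphs.
Variables (T I : finType) (F : I -> T -> T) (L : {set I}).

Definition graph_deg (p : T * T) : nat := #|[set l in L | p.2 == F l p.1]|.

Lemma card_graph_in (P : {set T * T}) (E : I -> T * T -> bool) l :
  {in P, forall p, E l p = (p.2 == F l p.1)} ->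
  #|[set p in P | E l p]| = #|[set t | (t, F l t) \in P]|.
Proof.
move=> El; have graph_inj : injective (fun t => (t, F l t)) by move=> t t' [].
rewrite -[RHS](card_imset _ graph_inj).
apply: eq_card => -[t s]; rewrite !inE; apply/andP/imsetP => [[Pts]|[t' Pt' [-> ->]]].
  by rewrite El //= => /eqP sE; exists t; rewrite ?inE -?sE.
by rewrite inE in Pt'; rewrite El //= eqxx.
Qed.

Lemma sum_graph_deg_in (P : {set T * T}) :
  (\sum_(p in P) graph_deg p = \sum_(l in L) #|[set t | (t, F l t) \in P]|)%N.
Proof.
rewrite sum_card_incidence; apply: eq_bigr => l _.
exact: (card_graph_in (E := fun l p => p.2 == F l p.1)).
Qed.

Lemma sum_graph_deg : (\sum_p graph_deg p = #|L| * #|T|)%N.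
Proof.
rewrite -(eq_bigl _ _ (@in_setT _)).
rewrite sum_graph_deg_in -sum_nat_const; apply: eq_bigr => l _.
by rewrite -cardsT; apply: eq_card => t; rewrite !inE.
Qed.

Lemma sum_graph_deg_sqr :
  (\sum_p graph_deg p ^ 2 = \sum_(l in L) \sum_(l' in L) #|[set t | F l t == F l' t]|)%N.
Proof.
pose on l (p : T * T) := p.2 == F l p.1.
rewrite -(sum_setX L L (fun ll => #|[set t | F ll.1 t == F ll.2 t]|)).
transitivity (\sum_(ll in setX L L) #|[set p in [set: T * T] | on ll.1 p && on ll.2 p]|)%N.
  rewrite -(sum_card_incidence _ _ (fun ll p => on ll.1 p && on ll.2 p)).
  rewrite -(eq_bigl _ _ (@in_setT _)); apply: eq_bigr => p _.
  rewrite expnS expn1 -cardsX; apply: eq_card => -[l l'].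
  by rewrite !inE andbACA.
apply: eq_bigr => -[l l'] _ /=.
rewrite (eq_card (B := [set p in [set p | on l' p] | on l p])) => [|p]; last first.
  by rewrite !inE /= andbC.
by rewrite (card_graph_in (E := on)) //; apply: eq_card => t; rewrite !inE.
Qed.

End FunctionGraphs.

Section SecondMoment.
Variable F : realFieldType.

Lemma sqr_sum_le_card_sum_sqr (X : finType) (P : {set X}) (e : X -> F) :
  (\sum_(x in P) e x) ^+ 2 <= #|P|%:R * \sum_(x in P) e x ^+ 2.
Proof.
set D := \sum_(x in P) e x; set S2 := \sum_(x in P) e x ^+ 2; set p : F := #|P|%:R.
have : 0 <= \sum_(x in P) (p * e x - D) ^+ 2 by apply: sumr_ge0 => x _; exact: sqr_ge0.
have -> : \sum_(x in P) (p * e x - D) ^+ 2 = p * (p * S2 - D ^+ 2).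
  rewrite (eq_bigr (fun x => p ^+ 2 * e x ^+ 2 - 2 * p * D * e x + D ^+ 2)) => [|x _]; last by ring.
  by rewrite big_split sumrB -!mulr_sumr sumr_const -mulr_natr -/D -/S2 -/p /=; ring.
have [p_gt0|p_lt0|/eqP] := ltrgt0P p.
- by rewrite pmulr_rge0 // subr_ge0.
- by move: p_lt0; rewrite ltNge ler0n.
rewrite pnatr_eq0 cards_eq0 => /eqP P0 _.
by rewrite /D /S2 P0 !big_set0 expr0n mulr0.
Qed.

Lemma sqr_deviation_le (X : finType) (d : X -> F) (P : {set X}) (Q : F) :
  \sum_x d x ^+ 2 <= Q ->
  (#|X|%:R * \sum_(x in P) d x - #|P|%:R * \sum_x d x) ^+ 2
    <= #|P|%:R * #|X|%:R * (#|X|%:R * Q - (\sum_x d x) ^+ 2).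
Proof.
set n : F := #|X|%:R; set p : F := #|P|%:R; set S := \sum_x d x => sumQ.
pose e x := n * d x - S.
have sumPe : \sum_(x in P) e x = n * \sum_(x in P) d x - p * S.
  by rewrite sumrB -mulr_sumr sumr_const -mulr_natl.
have sumXe : \sum_x e x ^+ 2 = n * (n * \sum_x d x ^+ 2 - S ^+ 2).
  rewrite (eq_bigr (fun x => n ^+ 2 * d x ^+ 2 - 2 * n * S * d x + S ^+ 2)) => [|x _]; last first.
    by rewrite /e; ring.
  by rewrite big_split sumrB -!mulr_sumr sumr_const -mulr_natr -/S /=; ring.
have n_ge0 : 0 <= n by rewrite ler0n.
have p_ge0 : 0 <= p by rewrite ler0n.
rewrite -sumPe (le_trans (sqr_sum_le_card_sum_sqr P e)) // -mulrA ler_wpM2l //.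
apply: (le_trans (y := \sum_x e x ^+ 2)).
  by rewrite [X in _ <= X](bigID (mem P)) /= lerDl sumr_ge0 // => x _; rewrite sqr_ge0.
by rewrite sumXe ler_wpM2l // lerB // ler_wpM2l.
Qed.

End SecondMoment.

(* The degrees d on the N^2 points of X have mean L / N and variance at most L W / N^2;
   Cauchy-Schwarz bounds the excess of I0 over the expected count |P| L / N by this variance. *)
Lemma incidence_dichotomy (X : finType) (d : X -> nat) (P : {set X}) (N L W I0 : nat) :
  #|X| = (N * N)%N -> (\sum_x d x = L * N)%N -> (\sum_x d x ^ 2 <= L * (L + W))%N ->
  (I0 <= \sum_(x in P) d x)%N ->
  (N * I0 <= 2 * #|P| * L)%N \/ (I0 ^ 2 <= 4 * #|P| * L * W)%N.
Proof.
move=> cardX sumd sumd2 leI0; have [|ltI0] := leqP; [by left|right].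
have sumd2Q : \sum_x ((d x)%:R : rat) ^+ 2 <= (L * (L + W))%:R.
  by rewrite -(eq_bigr _ (fun x _ => natrX _ _ _)) -natr_sum ler_nat.
have := sqr_deviation_le P sumd2Q.
rewrite -!natr_sum cardX sumd -(ler_nat rat) natrX.
move: ltI0 leI0; rewrite -(ltr_nat rat) -(ler_nat rat) !(natrM, natrD, natrX).
set n : rat := N%:R; set l : rat := L%:R; set w : rat := W%:R; set i : rat := I0%:R.
set p : rat := #|P|%:R; set D : rat := (\sum_(x in P) d x)%:R => ltI0 leI0 dev.
have [n_ge0 i_ge0 p_ge0 l_ge0] : [/\ 0 <= n, 0 <= i, 0 <= p & 0 <= l] by rewrite !ler0n.
have n_gt0 : 0 < n.
  by rewrite lt_def n_ge0 andbT; apply: contraTneq ltI0 => ->; rewrite mul0r -leNgt !mulr_ge0.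
have n2_gt0 : 0 < n ^+ 2 by rewrite exprn_gt0.
have devD : (n * D - p * l) ^+ 2 <= p * n ^+ 2 * l * w.
  rewrite -(ler_pM2l n2_gt0).
  have -> : n ^+ 2 * (n * D - p * l) ^+ 2 = (n * n * D - p * (l * n)) ^+ 2 by ring.
  suff -> : n ^+ 2 * (p * n ^+ 2 * l * w) =
            p * (n * n) * (n * n * (l * (l + w)) - (l * n) ^+ 2) by [].
  ring.
have niD : n * i <= 2 * (n * D - p * l).
  have : n * i <= n * D by rewrite ler_wpM2l.
  lra.
rewrite -(ler_pM2l n2_gt0) (_ : n ^+ 2 * i ^+ 2 = (n * i) ^+ 2); last by ring.
apply: (le_trans (y := (2 * (n * D - p * l)) ^+ 2)).
  by rewrite ler_sqr ?nnegrE ?mulr_ge0 //; have := mulr_ge0 n_ge0 i_ge0; lra.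
rewrite exprMn (le_trans (ler_wpM2l _ devD)) //.
by rewrite le_eqVlt; apply/orP; left; apply/eqP; ring.
Qed.

Lemma mu_gt0 (R : finComUnitRingType) (G : {group {unit R}}) (phi : {unit R} -> R) :
  (0 < mu G phi)%N.
Proof.
apply: leq_trans (leq_bigmax (phi 1%g)); apply/card_gt0P.
by exists 1%g; rewrite !inE group1 eqxx.
Qed.

Section SumProductLines.
Variables (R : finComUnitRingType) (z : R) (n : nat).
Hypotheses (zmax : is_maximal_ideal (pideal z)) (zn0 : z ^+ n = 0).
Variables (G : {group {unit R}}) (g h : {unit R} -> {unit R}) (A B C : {set {unit R}}).
Hypothesis AG : A \subset G.

Definition line (l : {unit R} * {unit R}) (t : R) : R :=
  val (g l.1) * (val (h l.1) + t - val l.2).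

Let m := mu G (fun x => val (g x)).

Lemma card_line_meet_unit l l' : val (g l.1) - val (g l'.1) \is a GRing.unit ->
  (#|[set t | line l t == line l' t]| <= 1)%N.
Proof.
move=> unit_diff; apply/card_le1_eqP => t t'; rewrite !inE => /eqP eqt /eqP eqt'.
have : (val (g l.1) - val (g l'.1)) * (t - t') = (val (g l.1) - val (g l'.1)) * 0.
  rewrite mulr0 (_ : _ * _ = (line l t - line l' t) - (line l t' - line l' t')).
    by rewrite eqt eqt' !subrr.
  by rewrite /line; ring.
by move/(mulrI unit_diff)/eqP; rewrite subr_eq0 => /eqP.
Qed.

Lemma sum_card_line_meet_le x c x' :
  (\sum_(c' in C) #|[set t | line (x, c) t == line (x', c') t]| <= #|R|)%N.
Proof.
have -> : (\sum_(c' in C) #|[set t | line (x, c) t == line (x', c') t]| =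
    \sum_(t in [set: R]) #|[set c' in C | line (x, c) t == line (x', c') t]|)%N.
  rewrite sum_card_incidence; apply: eq_bigr => c' _.
  by apply: eq_card => t; rewrite !inE.
rewrite -[#|R|]muln1 -cardsT -sum_nat_const; apply: leq_sum => t _.
apply/card_le1_eqP => c1 c2; rewrite !inE => /andP[_ /eqP eq1] /andP[_ /eqP eq2].
move: eq2; rewrite eq1 /line => /(mulrI (valP (g x'))) /addrI /oppr_inj.
by move=> /val_inj.
Qed.

Lemma card_nonunit_diff_le x :
  (#|[set x' in A | (val (g x) - val (g x'))%R \isn't a GRing.unit]| <= m * #|pideal z|)%N.
Proof.
set X' := [set x' in A | _]; pose f x' := val (g x').
apply: leq_trans (card_le_fibers (f := f) (k := m) _) _ => [y _|].
  apply: leq_trans (leq_bigmax (f y)); apply: subset_leq_card; apply/subsetP => y'.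
  by rewrite !inE => /andP[/andP[Ay' _] ->]; rewrite (subsetP AG).
rewrite mulnC leq_mul2l; apply/orP; right.
rewrite -[#|pideal z|](card_imset _ (subrI (val (g x)))); apply: subset_leq_card.
apply/subsetP => v /imsetP[y]; rewrite inE => /andP[_ /(nonunit_mem_pideal zmax zn0) zy] ->.
by apply/imsetP; exists (val (g x) - f y); rewrite // opprB addrC subrK.
Qed.

Lemma sum_card_line_meet l :
  (\sum_(l' in setX A C) #|[set t | line l t == line l' t]|
     <= #|A| * #|C| + #|R| * (m * #|pideal z|))%N.
Proof.
case: l => x c; rewrite sum_setX.
pose nonunit x' := (val (g x) - val (g x'))%R \isn't a GRing.unit.
apply: (@leq_trans (\sum_(x' in A) (#|C| + nonunit x' * #|R|))%N).
  apply: leq_sum => x' _; rewrite /nonunit.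
  case: (boolP (_ \is a GRing.unit)) => [unit_diff|_] /=.
    rewrite addn0 -sum1_card; apply: leq_sum => c' _.
    exact: card_line_meet_unit.
  by rewrite mul1n (leq_trans (sum_card_line_meet_le x c x')) ?leq_addl.
rewrite big_split sum_nat_const -big_distrl /= leq_add2l mulnC leq_mul2l.
by apply/orP; right; rewrite sum_pred_card card_nonunit_diff_le.
Qed.

Lemma card_line_incidences :
  (#|A| * #|C| * #|B| <= \sum_(l in setX A C)
     #|[set t | (t, line l t) \in setX (sumset B C) (fimage g h A B)]|)%N.
Proof.
rewrite -cardsX -sum_nat_const; apply: leq_sum => -[x c]; rewrite inE => /andP[Ax Cc].
have shift_inj : injective (fun b : {unit R} => val b + val c) by move=> b b' /addIr/val_inj.
rewrite -(card_imset _ shift_inj); apply: subset_leq_card; apply/subsetP => _ /imsetP[b Bb ->].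
rewrite !inE; apply/andP; split; first by apply/imset2P; exists b c.
by apply/imset2P; exists x b => //; rewrite /line addrA addrK.
Qed.

Lemma sumset_fimage_dichotomy :
  (#|R| * #|B| <= 2 * (#|fimage g h A B| * #|sumset B C|))%N \/
  (#|A| * #|B| ^ 2 * #|C|
     <= 4 * (#|fimage g h A B| * #|sumset B C|) * (#|R| * (m * #|pideal z|)))%N.
Proof.
set P := setX (sumset B C) (fimage g h A B); set L := (#|A| * #|C|)%N.
set W := (#|R| * (m * #|pideal z|))%N.
rewrite [(_ * #|sumset B C|)%N]mulnC -cardsX -/P.
have [L0|L_gt0] := posnP L.
  by right; rewrite (_ : _ * _ * _ = L * #|B| ^ 2)%N ?L0 // /L; lia.
have deg2 : (\sum_p graph_deg line (setX A C) p ^ 2 <= L * (L + W))%N.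
  rewrite sum_graph_deg_sqr {1}/L -cardsX -sum_nat_const; apply: leq_sum => l _.
  exact: sum_card_line_meet.
have leI0 : (L * #|B| <= \sum_(p in P) graph_deg line (setX A C) p)%N.
  by rewrite sum_graph_deg_in card_line_incidences.
have deg1 : (\sum_p graph_deg line (setX A C) p = L * #|R|)%N by rewrite sum_graph_deg cardsX.
have [bound|bound] := incidence_dichotomy (card_prod _ _) deg1 deg2 leI0.
  by left; rewrite -(leq_pmul2r L_gt0) mulnAC -mulnA.
right; rewrite -(leq_pmul2l L_gt0).
have -> : (L * (#|A| * #|B| ^ 2 * #|C|) = (L * #|B|) ^ 2)%N by rewrite /L; ring.
by have -> : (L * (4 * #|P| * W) = 4 * #|P| * L * W)%N by ring.
Qed.

End SumProductLines.

Theorem theorem1p12 :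
  forall r : nat, exists c : rat, 0 < c /\
  forall (R : finComUnitRingType) (z : R),
    finite_valuation_ring R -> uniformizer z -> nilp_degree z r ->
  forall (G : {group {unit R}}) (g h : {unit R} -> {unit R})
         (A B C : {set {unit R}}),
    A \subset G ->
    let q := residue_card z in
    let m := mu G (fun x => val (g x)) in
    c * Num.min ((q ^ r * #|B|)%:R / m%:R)
                ((#|A| * #|B| ^ 2 * #|C|)%:R / ((m ^ 2 * q ^ (2 * r - 1))%:R))
      <= (#|fimage g h A B| * #|sumset B C|)%:R.
Proof.
move=> r; exists (1 / 4); split=> // R z _ [_ zmax] zr G g h A B C AG /=.
set q := residue_card z; set m := mu G _.
have m_gt0 : (0 < m)%N by apply: mu_gt0.
have -> : (q ^ r = #|R|)%N by rewrite (card_ring zmax zr).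
have -> : (q ^ (2 * r - 1) = #|R| * #|pideal z|)%N.
  have r_gt0 := nilp_degree_gt0 zr.
  by rewrite (card_ring zmax zr) (card_maximal_ideal zmax zr) -expnD; congr (_ ^ _)%N; lia.
set p := (#|fimage g h A B| * #|sumset B C|)%N; set N := #|R|; set M := #|pideal z|.
have m_pos : (0 : rat) < m%:R by rewrite ltr0n.
suff : Num.min ((N * #|B|)%:R / m%:R) ((#|A| * #|B| ^ 2 * #|C|)%:R / (m ^ 2 * (N * M))%:R)
         <= 4 * (p%:R : rat) by lra.
rewrite ge_min; apply/orP.
case: (sumset_fimage_dichotomy zmax zr.1 g h B C AG) => bound; [left|right].
  rewrite ler_pdivrMr // -!natrM ler_nat; apply: leq_trans bound _.
  by rewrite -/p -mulnA leq_mul // leq_pmulr.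
have NM_gt0 : (0 < N * M)%N.
  by rewrite muln_gt0; apply/andP; split; apply/card_gt0P; exists 0%R; rewrite ?pideal0.
rewrite ler_pdivrMr; last by rewrite ltr0n muln_gt0 NM_gt0 expn_gt0 m_gt0.
rewrite -!natrM ler_nat; apply: leq_trans bound _.
have -> : (4 * p * (m ^ 2 * (N * M)) = 4 * p * (N * (m * M)) * m)%N by ring.
exact: leq_pmulr.
Qed.
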